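(* Let $g:\mathbb{R}^2\to\mathbb{R}^2$ be a $C^1$ map with $g(0)=0$, let $L>0$, and for $\delta>0$ let $\tilde S(\delta)=\{(x,y):|y|\le L|x|,\ |x|\le\delta\}$. Let $\tilde U=[-\alpha,\alpha]\times[-\beta,\beta]$ with $\alpha,\beta>0$ and $\beta/\alpha>L$. Let $\tilde v:[-1,1]\to\tilde U$ be continuous with $\tilde v(-1)\in\{y=-Lx\}$, $\tilde v(1)\in\{y=Lx\}$ and $\pi_x\tilde v(s)\neq0$ for all $s\in[-1,1]$. Assume that for every matrix $C\in[Dg(\tilde U)]$ and every $y$ with $|y|\le L$ we have $|\pi_x C(1,y)|>1$ and $|\pi_y C(1,y)|\le L$. Then for every $\delta>0$ there exist $p\in\tilde S(\delta)$ and an integer $n\ge0$ such that $g^k(p)\in\tilde U$ for $0\le k\le n$ and $g^n(p)\in\tilde v([-1,1])$.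
   Context: $\pi_x,\pi_y$ denote the projections of $\mathbb{R}^2$ onto the first and second coordinates. For a set $U\subset\mathbb{R}^2$, $[Dg(U)]$ denotes the interval enclosure of the derivative: the set of all $2\times2$ matrices $(a_{ij})$ with $a_{ij}\in[\inf_{p\in U}\partial g_i/\partial x_j(p),\ \sup_{p\in U}\partial g_i/\partial x_j(p)]$. *)

From Stdlib Require Import Reals.
From Coquelicot Require Import Coquelicot.
Open Scope R_scope.

(* Points of R^2 are pairs; pi_x = fst, pi_y = snd. *)
Definition comp1 (g : R * R -> R * R) (p : R * R) : R := fst (g p).
Definition comp2 (g : R * R -> R * R) (p : R * R) : R := snd (g p).

Definition ex_dx (f : R * R -> R) (p : R * R) : Prop :=
  ex_derive (fun t => f (t, snd p)) (fst p).
Definition ex_dy (f : R * R -> R) (p : R * R) : Prop :=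
  ex_derive (fun t => f (fst p, t)) (snd p).
Definition dx (f : R * R -> R) (p : R * R) : R :=
  Derive (fun t => f (t, snd p)) (fst p).
Definition dy (f : R * R -> R) (p : R * R) : R :=
  Derive (fun t => f (fst p, t)) (snd p).

Definition C1_scalar (f : R * R -> R) : Prop :=
  (forall p, ex_dx f p) /\ (forall p, ex_dy f p) /\
  (forall p, continuous (dx f) p) /\ (forall p, continuous (dy f) p).

Definition C1_map (g : R * R -> R * R) : Prop :=
  C1_scalar (comp1 g) /\ C1_scalar (comp2 g).

Definition Dg_entry (g : R * R -> R * R) (i j : nat) : R * R -> R :=
  match i, j with
  | O, O => dx (comp1 g)
  | O, _ => dy (comp1 g)
  | _, O => dx (comp2 g)
  | _, _ => dy (comp2 g)
  end.

Definition in_hull (U : R * R -> Prop) (d : R * R -> R) (a : R) : Prop :=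
  let S := fun r => exists p, U p /\ r = d p in
  Rbar_le (Glb_Rbar S) (Finite a) /\ Rbar_le (Finite a) (Lub_Rbar S).

(* 2x2 matrix (a11,a12,a21,a22) belongs to the interval enclosure [Dg(U)] *)
Definition in_IDg (g : R * R -> R * R) (U : R * R -> Prop)
    (a11 a12 a21 a22 : R) : Prop :=
  in_hull U (Dg_entry g 0 0) a11 /\ in_hull U (Dg_entry g 0 1) a12 /\
  in_hull U (Dg_entry g 1 0) a21 /\ in_hull U (Dg_entry g 1 1) a22.

Definition Scone (L delta : R) (p : R * R) : Prop :=
  Rabs (snd p) <= L * Rabs (fst p) /\ Rabs (fst p) <= delta.

Definition Box (alpha beta : R) (p : R * R) : Prop :=
  Rabs (fst p) <= alpha /\ Rabs (snd p) <= beta.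

From Stdlib Require Import Reals Lra Lia Classical.
From Coquelicot Require Import Coquelicot.
Open Scope R_scope.

(* The enclosure hypothesis makes the first row of Dg, applied to vectors
   (1, y) with |y| <= L, keep a fixed sign e and a size at least some
   lam > 1 uniformly on the box, while the second row stays below L.  By the
   mean value theorem, g then maps two points of the box that lie in each
   other's L-cone to two points still in the cone, with their x-distance
   multiplied by at least lam.  Iterating on a short horizontal segment from
   the origin towards the side where v lies, the images stay graphs of slope
   at most L over x and grow geometrically, so some iterate of a sub-segment
   stays in the box and runs from the origin to the vertical side x = +-alpha
   on the side of v (one extra iterate fixes the side when e = -1).  Such a
   graph separates the two ends of v, which lie on the lines y = -Lx and
   y = Lx, so v meets it. *)

Definition is_sign (e : R) : Prop := e = 1 \/ e = -1.

Lemma Rabs_sign_mul e x : is_sign e -> Rabs (e * x) = Rabs x.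
Proof.
  intros [-> | ->]; [now rewrite Rmult_1_l|].
  replace (-1 * x) with (- x) by ring; apply Rabs_Ropp.
Qed.

Lemma sign_sqr e : is_sign e -> e * e = 1.
Proof. intros [-> | ->]; ring. Qed.

Lemma sign_mul e f : is_sign e -> is_sign f -> is_sign (e * f).
Proof. intros [-> | ->] [-> | ->]; [left|right|right|left]; ring. Qed.

Lemma sign_pow e n : is_sign e -> is_sign (e ^ n).
Proof. intros He; induction n; [left; reflexivity|now apply sign_mul]. Qed.

Lemma sign_mul_Rabs e x : is_sign e -> 0 <= e * x -> e * x = Rabs x.
Proof. intros H Hx; rewrite <- (Rabs_sign_mul e x H); now rewrite Rabs_pos_eq. Qed.

Lemma sign_of_nonzero x : x <> 0 -> exists e, is_sign e /\ 0 < e * x.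
Proof.
  intros Hx; destruct (Rlt_dec 0 x).
  - exists 1; split; [left|]; lra.
  - exists (-1); split; [right|]; lra.
Qed.

Lemma between_0_of_sign e a b : is_sign e -> e * a <= 0 -> 0 <= e * b ->
  Rmin a b <= 0 <= Rmax a b.
Proof.
  intros [-> | ->] Ha Hb; unfold Rmin, Rmax; destruct Rle_dec; lra.
Qed.

Lemma sign_between e a x : is_sign e -> 0 <= a <= e * x -> Rmin 0 x <= e * a <= Rmax 0 x.
Proof. intros [-> | ->] Ha; unfold Rmin, Rmax; destruct Rle_dec; lra. Qed.

Lemma segment_outside_unit_same_side e a c : is_sign e -> 1 < e * a ->
  (forall s, 0 <= s <= 1 -> 1 < Rabs (a + s * c)) -> 1 < e * (a + c).
Proof.
  intros He Ha Hseg.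
  destruct (Rlt_or_le 1 (e * (a + c))) as [|Hle]; [assumption|exfalso].
  assert (H1 := Hseg 1 ltac:(lra)); rewrite Rmult_1_l, <- (Rabs_sign_mul e) in H1 by exact He.
  assert (Hneg : e * (a + c) < -1) by (unfold Rabs in H1; destruct Rcase_abs; lra).
  (* the affine map s |-> e (a + s c) vanishes at s = e a / (e a - e (a + c)) *)
  set (s := e * a / (e * a - e * (a + c))).
  assert (Hs : 0 <= s <= 1).
  { unfold s; split.
    - apply Rmult_le_pos; [lra|apply Rlt_le, Rinv_0_lt_compat; lra].
    - apply Rmult_le_reg_r with (e * a - e * (a + c)); [lra|].
      unfold Rdiv; rewrite Rmult_assoc, Rinv_l by lra; lra. }
  assert (Hzero : e * (a + s * c) = 0).
  { unfold s; field_simplify; [|lra].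
    replace (e * e) with 1 by (symmetry; now apply sign_sqr); unfold Rdiv; ring. }
  assert (H0 := Hseg s Hs); rewrite <- (Rabs_sign_mul e) in H0 by exact He.
  rewrite Hzero, Rabs_R0 in H0; lra.
Qed.

(** * Interval enclosures *)

Lemma in_hull_value U d p : U p -> in_hull U d (d p).
Proof.
  intros Hp; split.
  - apply (proj1 (Glb_Rbar_correct _)); now exists p.
  - apply (proj1 (Lub_Rbar_correct _)); now exists p.
Qed.

Lemma in_hull_segment U d a b s : in_hull U d a -> in_hull U d b -> 0 <= s <= 1 ->
  in_hull U d (a + s * (b - a)).
Proof.
  intros [Ha1 Ha2] [Hb1 Hb2] Hs.
  assert (Hm : Rmin a b <= a + s * (b - a) <= Rmax a b).
  { assert (0 <= s * Rabs (b - a) <= Rabs (b - a)) by (generalize (Rabs_pos (b - a)); nra).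
    unfold Rmin, Rmax, Rabs in *; destruct Rle_dec, Rcase_abs; nra. }
  split.
  - apply Rbar_le_trans with (Finite (Rmin a b)); [|exact (proj1 Hm)].
    unfold Rmin; destruct Rle_dec; assumption.
  - apply Rbar_le_trans with (Finite (Rmax a b)); [exact (proj2 Hm)|].
    unfold Rmax; destruct Rle_dec; assumption.
Qed.

Lemma in_hull_min U d p c : U p -> (forall a, in_hull U d a -> c <= a) ->
  exists m, in_hull U d m /\ forall a, in_hull U d a -> m <= a.
Proof.
  intros Hp Hc.
  destruct (in_hull_value U d p Hp) as [Hlo Hhi].
  unfold in_hull in *; cbv zeta in *.
  destruct (Glb_Rbar _) as [m| |]; simpl in Hlo.
  - exists m; split; [split|].
    + apply Rle_refl.
    + apply Rbar_le_trans with (Finite (d p)); [exact Hlo|exact Hhi].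
    + now intros a [Ha _].
  - contradiction.
  - exfalso.
    assert (Hbelow := Hc (Rmin c (d p) - 1)).
    generalize (Rmin_l c (d p)) (Rmin_r c (d p)); intros.
    enough (c <= Rmin c (d p) - 1) by lra.
    apply Hbelow; split; [exact I|].
    apply Rbar_le_trans with (Finite (d p)); [simpl; lra|exact Hhi].
Qed.

Lemma in_hull_max U d p c : U p -> (forall a, in_hull U d a -> a <= c) ->
  exists m, in_hull U d m /\ forall a, in_hull U d a -> a <= m.
Proof.
  intros Hp Hc.
  destruct (in_hull_value U d p Hp) as [Hlo Hhi].
  unfold in_hull in *; cbv zeta in *.
  destruct (Lub_Rbar _) as [m| |]; simpl in Hhi.
  - exists m; split; [split|].
    + apply Rbar_le_trans with (Finite (d p)); [exact Hlo|exact Hhi].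
    + apply Rle_refl.
    + now intros a [_ Ha].
  - exfalso.
    assert (Habove := Hc (Rmax c (d p) + 1)).
    generalize (Rmax_l c (d p)) (Rmax_r c (d p)); intros.
    enough (Rmax c (d p) + 1 <= c) by lra.
    apply Habove; split; [|exact I].
    apply Rbar_le_trans with (Finite (d p)); [exact Hlo|simpl; lra].
  - contradiction.
Qed.

Lemma in_hull_min_dir U d p e : U p -> is_sign e -> (forall a, in_hull U d a -> 1 < e * a) ->
  exists m, in_hull U d m /\ forall a, in_hull U d a -> e * m <= e * a.
Proof.
  intros Hp [-> | ->] Hc.
  - destruct (in_hull_min U d p 1 Hp) as [m [Hm Hmin]].
    { intros a Ha; generalize (Hc a Ha); lra. }
    exists m; split; [exact Hm|]; intros a Ha; generalize (Hmin a Ha); lra.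
  - destruct (in_hull_max U d p (-1) Hp) as [m [Hm Hmax]].
    { intros a Ha; generalize (Hc a Ha); lra. }
    exists m; split; [exact Hm|]; intros a Ha; generalize (Hmax a Ha); lra.
Qed.

Lemma in_hull_bounded U d p K : U p -> (forall b, in_hull U d b -> Rabs b <= K) ->
  exists b0, in_hull U d b0 /\ forall b, in_hull U d b -> Rabs b <= Rabs b0.
Proof.
  intros Hp HK.
  destruct (in_hull_min U d p (- K) Hp) as [lo [Hlo Hmin]].
  { intros b Hb; generalize (HK b Hb); unfold Rabs; destruct Rcase_abs; lra. }
  destruct (in_hull_max U d p K Hp) as [hi [Hhi Hmax]].
  { intros b Hb; generalize (HK b Hb); unfold Rabs; destruct Rcase_abs; lra. }
  destruct (Rle_dec (Rabs lo) (Rabs hi)).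
  - exists hi; split; [exact Hhi|]; intros b Hb; generalize (Hmin b Hb) (Hmax b Hb).
    unfold Rabs in *; repeat destruct Rcase_abs; lra.
  - exists lo; split; [exact Hlo|]; intros b Hb; generalize (Hmin b Hb) (Hmax b Hb).
    unfold Rabs in *; repeat destruct Rcase_abs; lra.
Qed.

Lemma slope_attaining_minus_abs e L b : is_sign e -> 0 <= L ->
  exists y, Rabs y <= L /\ e * (b * y) = - (L * Rabs b).
Proof.
  intros He HL; destruct (Rle_dec 0 b).
  - exists (- e * L); split.
    + rewrite Ropp_mult_distr_l_reverse, Rabs_Ropp, Rabs_sign_mul, Rabs_pos_eq by assumption; lra.
    + rewrite Rabs_pos_eq by lra.
      replace (e * (b * (- e * L))) with (- (e * e) * (b * L)) by ring.
      rewrite sign_sqr by exact He; ring.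
  - exists (e * L); split.
    + rewrite Rabs_sign_mul, Rabs_pos_eq by assumption; lra.
    + rewrite Rabs_left by lra.
      replace (e * (b * (e * L))) with ((e * e) * (b * L)) by ring.
      rewrite sign_sqr by exact He; ring.
Qed.

Section UniformExpansion.

Variables (U : R * R -> Prop) (d1 d2 : R * R -> R) (L : R) (p0 : R * R).
Hypothesis Up0 : U p0.
Hypothesis HL : 0 < L.
Hypothesis Hexp : forall a b y, in_hull U d1 a -> in_hull U d2 b -> Rabs y <= L ->
  1 < Rabs (a + b * y).

Lemma hull_expansion_one_side : exists e, is_sign e /\
  forall a b y, in_hull U d1 a -> in_hull U d2 b -> Rabs y <= L -> 1 < e * (a + b * y).
Proof.
  set (a0 := d1 p0).
  assert (Ha0 : in_hull U d1 a0) by now apply in_hull_value.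
  assert (Hb0 : in_hull U d2 (d2 p0)) by now apply in_hull_value.
  assert (Hy0 : Rabs 0 <= L) by (rewrite Rabs_R0; lra).
  assert (Habs : forall a, in_hull U d1 a -> 1 < Rabs a).
  { intros a Ha; generalize (Hexp a (d2 p0) 0 Ha Hb0 Hy0); now rewrite Rmult_0_r, Rplus_0_r. }
  destruct (sign_of_nonzero a0) as [e [He Hea0]].
  { intros E; generalize (Habs a0 Ha0); rewrite E, Rabs_R0; lra. }
  assert (Hea0' : 1 < e * a0) by (rewrite (sign_mul_Rabs e a0 He) by lra; now apply Habs).
  exists e; split; [exact He|]; intros a b y Ha Hb Hy.
  assert (Hea : 1 < e * a).
  { replace a with (a0 + (a - a0)) by ring.
    apply segment_outside_unit_same_side; [exact He|exact Hea0'|].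
    intros s Hs; apply Habs; now apply in_hull_segment. }
  apply segment_outside_unit_same_side; [exact He|exact Hea|].
  intros s Hs; replace (s * (b * y)) with (b * (s * y)) by ring.
  apply Hexp; [exact Ha|exact Hb|].
  rewrite Rabs_mult, Rabs_pos_eq by lra; generalize (Rabs_pos y); nra.
Qed.

(* The hull of [d1] is closed and, by the one-sided bound, bounded on one
   side; the hull of [d2] is bounded.  The extremal values give [lam]. *)
Lemma hull_uniform_expansion : exists e lam, is_sign e /\ 1 < lam /\
  forall a b y, in_hull U d1 a -> in_hull U d2 b -> Rabs y <= L -> lam <= e * (a + b * y).
Proof.
  destruct hull_expansion_one_side as [e [He Hside]].
  assert (Hb0 : in_hull U d2 (d2 p0)) by now apply in_hull_value.
  destruct (in_hull_min_dir U d1 p0 e Up0 He) as [m [Hm Hmin]].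
  { intros a Ha; generalize (Hside a (d2 p0) 0 Ha Hb0 ltac:(rewrite Rabs_R0; lra)).
    now rewrite Rmult_0_r, Rplus_0_r. }
  assert (Hworst : forall b, in_hull U d2 b -> 1 < e * m - L * Rabs b).
  { intros b Hb; destruct (slope_attaining_minus_abs e L b He ltac:(lra)) as [y [Hy Eby]].
    generalize (Hside m b y Hm Hb Hy); rewrite Rmult_plus_distr_l, Eby; lra. }
  destruct (in_hull_bounded U d2 p0 ((e * m - 1) / L) Up0) as [b0 [Hb0' Hmax]].
  { intros b Hb; apply Rmult_le_reg_r with L; [exact HL|].
    unfold Rdiv; rewrite Rmult_assoc, Rinv_l by lra; generalize (Hworst b Hb); lra. }
  exists e, (e * m - L * Rabs b0); split; [exact He|split; [now apply Hworst|]].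
  intros a b y Ha Hb Hy.
  assert (Hby : - (e * (b * y)) <= L * Rabs b0).
  { apply Rle_trans with (Rabs (e * (b * y))).
    - rewrite <- Rabs_Ropp; apply RRle_abs.
    - rewrite Rabs_sign_mul, Rabs_mult, Rmult_comm by exact He.
      apply Rmult_le_compat; auto using Rabs_pos. }
  generalize (Hmin a Ha); rewrite Rmult_plus_distr_l; lra.
Qed.

End UniformExpansion.

(** * Cone expansion *)

Lemma partial_increment f p q : (forall r, ex_dx f r) -> (forall r, ex_dy f r) ->
  exists a b, Rmin (fst p) (fst q) <= a <= Rmax (fst p) (fst q) /\
    Rmin (snd p) (snd q) <= b <= Rmax (snd p) (snd q) /\
    f q - f p = dx f (a, snd q) * (fst q - fst p) + dy f (fst p, b) * (snd q - snd p).
Proof.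
  intros Hx Hy; destruct p as [px py], q as [qx qy]; simpl.
  destruct (MVT_gen (fun t => f (t, qy)) px qx (fun t => dx f (t, qy))) as [a [Ha Ea]].
  { intros t _; exact (Derive_correct _ _ (Hx (t, qy))). }
  { intros t _; apply continuity_pt_filterlim; exact (ex_derive_continuous _ t (Hx (t, qy))). }
  destruct (MVT_gen (fun t => f (px, t)) py qy (fun t => dy f (px, t))) as [b [Hb Eb]].
  { intros t _; exact (Derive_correct _ _ (Hy (px, t))). }
  { intros t _; apply continuity_pt_filterlim; exact (ex_derive_continuous _ t (Hy (px, t))). }
  exists a, b; split; [exact Ha|split; [exact Hb|]].
  replace (f (qx, qy) - f (px, py)) with ((f (qx, qy) - f (px, qy)) + (f (px, qy) - f (px, py)))
    by ring.
  now rewrite Ea, Eb.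
Qed.

Lemma between_dist x y z : Rmin x y <= z <= Rmax x y -> Rabs (z - x) <= Rabs (y - x).
Proof. unfold Rmin, Rmax, Rabs; intros; repeat destruct Rle_dec; repeat destruct Rcase_abs; lra. Qed.

Lemma between_abs x y z : Rmin x y <= z <= Rmax x y -> Rabs z <= Rmax (Rabs x) (Rabs y).
Proof. unfold Rmin, Rmax, Rabs; intros; repeat destruct Rle_dec; repeat destruct Rcase_abs; lra. Qed.

Lemma ball_R_Rabs (x y eps : R) : ball x eps y <-> Rabs (y - x) < eps.
Proof. reflexivity. Qed.

(* Continuity of the partials bounds them near [p], and [partial_increment]
   turns this into a Lipschitz bound on [f] near [p]. *)
Lemma C1_scalar_continuous f : C1_scalar f -> forall p, continuous f p.
Proof.
  intros [Hx [Hy [Cx Cy]]] [px py].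
  set (A := Rabs (dx f (px, py)) + 1); set (B := Rabs (dy f (px, py)) + 1).
  assert (HA : 0 < A) by (unfold A; generalize (Rabs_pos (dx f (px, py))); lra).
  assert (HB : 0 < B) by (unfold B; generalize (Rabs_pos (dy f (px, py))); lra).
  destruct (proj1 (filterlim_locally _ _) (Cx (px, py)) (mkposreal 1 Rlt_0_1)) as [d1 K1].
  destruct (proj1 (filterlim_locally _ _) (Cy (px, py)) (mkposreal 1 Rlt_0_1)) as [d2 K2].
  apply (proj2 (filterlim_locally f _)); intros eps.
  assert (Heps : 0 < eps / (A + B)) by (apply Rdiv_lt_0_compat; [apply cond_pos|lra]).
  exists (mkposreal _ (Rmin_pos _ _ (Rmin_pos _ _ (cond_pos d1) (cond_pos d2)) Heps)).
  intros [qx qy] [Hqx Hqy]; simpl in Hqx, Hqy; rewrite ball_R_Rabs in Hqx, Hqy |- *.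
  assert (Hd := Rmin_l (Rmin d1 d2) (eps / (A + B))); assert (Hd' := Rmin_r (Rmin d1 d2) (eps / (A + B))).
  assert (Hd1 := Rmin_l d1 d2); assert (Hd2 := Rmin_r d1 d2).
  destruct (partial_increment f (px, py) (qx, qy) Hx Hy) as [a [b [Ha [Hb E]]]]; simpl in *.
  assert (Ha' := between_dist _ _ _ Ha); assert (Hb' := between_dist _ _ _ Hb).
  assert (Bx : Rabs (dx f (a, qy)) < A).
  { assert (Hn : ball (dx f (px, py)) 1 (dx f (a, qy)))
      by (apply K1; split; apply ball_R_Rabs; simpl; lra).
    rewrite ball_R_Rabs in Hn; unfold A; generalize (Rabs_triang_inv (dx f (a, qy)) (dx f (px, py))); lra. }
  assert (By : Rabs (dy f (px, b)) < B).
  { assert (Hn : ball (dy f (px, py)) 1 (dy f (px, b))).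
    { apply K2; split; apply ball_R_Rabs; simpl; [rewrite Rminus_diag, Rabs_R0; apply cond_pos|lra]. }
    rewrite ball_R_Rabs in Hn; unfold B; generalize (Rabs_triang_inv (dy f (px, b)) (dy f (px, py))); lra. }
  rewrite E; eapply Rle_lt_trans; [apply Rabs_triang|]; rewrite !Rabs_mult.
  assert (Hsum : A * (eps / (A + B)) + B * (eps / (A + B)) = eps) by (field; lra).
  assert (Rabs (dx f (a, qy)) * Rabs (qx - px) < A * (eps / (A + B)))
    by (apply Rmult_le_0_lt_compat; [apply Rabs_pos|apply Rabs_pos|lra|lra]).
  assert (Rabs (dy f (px, b)) * Rabs (qy - py) < B * (eps / (A + B)))
    by (apply Rmult_le_0_lt_compat; [apply Rabs_pos|apply Rabs_pos|lra|lra]).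
  lra.
Qed.

Lemma C1_map_continuous g : C1_map g -> forall p, continuous g p.
Proof.
  intros [H1 H2] p.
  apply (continuous_ext (fun q => (comp1 g q, comp2 g q))); [intros q; symmetry; apply surjective_pairing|].
  apply (continuous_comp_2 (comp1 g) (comp2 g) pair); try now apply C1_scalar_continuous.
  apply (continuous_ext (fun r => r)); [intros [] ; reflexivity|apply continuous_id].
Qed.

Lemma Box_between alpha beta p q a b : Box alpha beta p -> Box alpha beta q ->
  Rmin (fst p) (fst q) <= a <= Rmax (fst p) (fst q) ->
  Rmin (snd p) (snd q) <= b <= Rmax (snd p) (snd q) -> Box alpha beta (a, b).
Proof.
  intros [Hp1 Hp2] [Hq1 Hq2] Ha Hb; split; simpl.
  - generalize (between_abs _ _ _ Ha); unfold Rmax; destruct Rle_dec; lra.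
  - generalize (between_abs _ _ _ Hb); unfold Rmax; destruct Rle_dec; lra.
Qed.

Definition cone_expanding (g : R * R -> R * R) (U : R * R -> Prop) (L e lam : R) : Prop :=
  forall p q, U p -> U q -> Rabs (snd q - snd p) <= L * Rabs (fst q - fst p) ->
  exists mu, lam <= mu /\ e * (fst (g q) - fst (g p)) = mu * (fst q - fst p) /\
    Rabs (snd (g q) - snd (g p)) <= L * Rabs (fst q - fst p).

Lemma C1_cone_expanding g alpha beta L e lam : C1_map g ->
  (forall a b y, in_hull (Box alpha beta) (dx (comp1 g)) a ->
     in_hull (Box alpha beta) (dy (comp1 g)) b -> Rabs y <= L -> lam <= e * (a + b * y)) ->
  (forall a b y, in_hull (Box alpha beta) (dx (comp2 g)) a ->
     in_hull (Box alpha beta) (dy (comp2 g)) b -> Rabs y <= L -> Rabs (a + b * y) <= L) ->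
  cone_expanding g (Box alpha beta) L e lam.
Proof.
  intros [[Hx1 [Hy1 _]] [Hx2 [Hy2 _]]] Hexp Hcone p q Hp Hq Hpq.
  destruct (Req_dec (fst q) (fst p)) as [Eh|Eh].
  - assert (Ep : q = p).
    { rewrite Eh, Rminus_diag, Rabs_R0, Rmult_0_r in Hpq.
      destruct p, q; simpl in *; f_equal; [lra|].
      generalize (Rabs_pos (r2 - r0)); unfold Rabs in Hpq; destruct Rcase_abs; lra. }
    subst q; exists lam; rewrite !Rminus_diag, Rabs_R0; split; [lra|split; [ring|lra]].
  - set (y := (snd q - snd p) / (fst q - fst p)).
    assert (Hy : Rabs y <= L).
    { unfold y, Rdiv; rewrite Rabs_mult, Rabs_inv.
      apply Rmult_le_reg_r with (Rabs (fst q - fst p)); [apply Rabs_pos_lt; lra|].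
      rewrite Rmult_assoc, Rinv_l by (apply Rabs_no_R0; lra); lra. }
    assert (Edy : snd q - snd p = y * (fst q - fst p)) by (unfold y; field; lra).
    destruct (partial_increment _ p q Hx1 Hy1) as [a1 [b1 [Ha1 [Hb1 E1]]]].
    destruct (partial_increment _ p q Hx2 Hy2) as [a2 [b2 [Ha2 [Hb2 E2]]]].
    assert (Hsnd : forall b, Rmin (snd p) (snd q) <= b <= Rmax (snd p) (snd q) -> Box alpha beta (fst p, b)).
    { intros b Hb; apply (Box_between _ _ p q); auto; unfold Rmin, Rmax; destruct Rle_dec; lra. }
    assert (Hfst : forall a, Rmin (fst p) (fst q) <= a <= Rmax (fst p) (fst q) -> Box alpha beta (a, snd q)).
    { intros a Ha; apply (Box_between _ _ p q); auto; unfold Rmin, Rmax; destruct Rle_dec; lra. }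
    unfold comp1, comp2 in E1, E2; rewrite Edy in E1, E2.
    exists (e * (dx (comp1 g) (a1, snd q) + dy (comp1 g) (fst p, b1) * y)); split; [|split].
    + apply Hexp; auto; apply in_hull_value; auto.
    + rewrite E1; unfold comp1; ring.
    + rewrite E2.
      replace (dx (fun p => snd (g p)) (a2, snd q) * (fst q - fst p) +
               dy (fun p => snd (g p)) (fst p, b2) * (y * (fst q - fst p)))
        with ((dx (comp2 g) (a2, snd q) + dy (comp2 g) (fst p, b2) * y) * (fst q - fst p))
        by (unfold comp2; ring).
      rewrite Rabs_mult; apply Rmult_le_compat_r; [apply Rabs_pos|].
      apply Hcone; auto; apply in_hull_value; auto.
Qed.

(** * Orbits of a horizontal segment *)

Section SegmentOrbit.

Variables (g : R * R -> R * R) (alpha beta L e lam sigma : R).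
Hypothesis Hexpanding : cone_expanding g (Box alpha beta) L e lam.
Hypothesis Hcont : forall p, continuous g p.
Hypothesis Hfix : g (0, 0) = (0, 0).
Hypothesis HL : 0 < L.
Hypothesis He : is_sign e.
Hypothesis Hsigma : is_sign sigma.
Hypothesis Hlam : 1 < lam.
Hypothesis Halpha : 0 < alpha.
Hypothesis HLalpha : L * alpha < beta.

Definition orbit (n : nat) (t : R) : R * R := Nat.iter n g (sigma * t, 0).

Definition orient (n : nat) : R := e ^ n * sigma.

Lemma orient_sign n : is_sign (orient n).
Proof. apply sign_mul; [apply sign_pow|]; assumption. Qed.

Lemma orient_parity n : orient n = sigma \/ orient (S n) = sigma.
Proof.
  unfold orient; destruct He as [-> | ->].
  - left; rewrite pow1; ring.
  - destruct (sign_pow (-1) n He) as [E|E]; [left|right]; simpl; rewrite E; ring.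
Qed.

Lemma orbit_origin n : orbit n 0 = (0, 0).
Proof.
  induction n as [|n IH]; unfold orbit in *; simpl.
  - now rewrite Rmult_0_r.
  - now rewrite IH.
Qed.

Lemma orbit_continuous n t : continuous (orbit n) t.
Proof.
  induction n as [|n IH].
  - apply (continuous_comp_2 (fun t => sigma * t) (fun _ => 0) pair).
    + apply (continuous_mult (fun _ => sigma) (fun t => t)); [apply continuous_const|apply continuous_id].
    + apply continuous_const.
    + apply (continuous_ext (fun r => r)); [intros []; reflexivity|apply continuous_id].
  - exact (continuous_comp (orbit n) g t IH (Hcont _)).
Qed.

Lemma orbit_fst_continuity n : continuity (fun t => fst (orbit n t)).
Proof.
  intros t; apply continuity_pt_filterlim.
  apply (continuous_comp (orbit n) fst); [apply orbit_continuous|].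
  destruct (orbit n t); apply continuous_fst.
Qed.

Lemma Box_of_cone q : Rabs (snd q) <= L * Rabs (fst q) -> Rabs (fst q) <= alpha -> Box alpha beta q.
Proof.
  intros H1 H2; split; [exact H2|].
  assert (L * Rabs (fst q) <= L * alpha) by (apply Rmult_le_compat_l; lra); lra.
Qed.

Lemma orbit_expansion n u w :
  (forall k, (k < n)%nat -> Box alpha beta (orbit k u) /\ Box alpha beta (orbit k w)) ->
  exists mu, lam ^ n <= mu /\
    fst (orbit n w) - fst (orbit n u) = orient n * mu * (w - u) /\
    Rabs (snd (orbit n w) - snd (orbit n u)) <= L * Rabs (fst (orbit n w) - fst (orbit n u)).
Proof.
  induction n as [|n IH]; intros Hbox.
  - exists 1; unfold orbit, orient; simpl; split; [lra|split; [ring|]].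
    rewrite Rminus_diag, Rabs_R0; apply Rmult_le_pos; [lra|apply Rabs_pos].
  - destruct IH as [mu [Hmu [Ex Hc]]]; [intros k Hk; apply Hbox; lia|].
    destruct (Hbox n ltac:(lia)) as [Bu Bw].
    destruct (Hexpanding _ _ Bu Bw Hc) as [mu' [Hmu' [Ex' Hc']]].
    assert (Hpow : 0 < lam ^ n) by (apply pow_lt; lra).
    assert (Ex'' : fst (orbit (S n) w) - fst (orbit (S n) u) = e * mu' * (fst (orbit n w) - fst (orbit n u))).
    { rewrite Rmult_assoc, <- Ex', <- Rmult_assoc, sign_sqr, Rmult_1_l by exact He; reflexivity. }
    exists (mu * mu'); split; [|split].
    + simpl; rewrite Rmult_comm; apply Rmult_le_compat; lra.
    + rewrite Ex'', Ex; unfold orient; simpl; ring.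
    + rewrite Ex'', Rmult_assoc, Rabs_sign_mul, Rabs_mult, (Rabs_pos_eq mu') by (assumption || lra).
      apply Rle_trans with (1 := Hc'), Rmult_le_compat_l; [lra|].
      generalize (Rabs_pos (fst (orbit n w) - fst (orbit n u))); nra.
Qed.

Lemma orbit_from_origin n t : (forall k, (k < n)%nat -> Box alpha beta (orbit k t)) ->
  exists mu, lam ^ n <= mu /\ fst (orbit n t) = orient n * mu * t /\
    Rabs (snd (orbit n t)) <= L * Rabs (fst (orbit n t)).
Proof.
  intros Hbox.
  destruct (orbit_expansion n 0 t) as [mu [Hmu [Ex Hc]]].
  { intros k Hk; split; [|now apply Hbox].
    rewrite orbit_origin; split; simpl; rewrite Rabs_R0; [lra|].
    generalize (Rmult_lt_0_compat _ _ HL Halpha); lra. }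
  rewrite orbit_origin in Ex, Hc; simpl in Ex, Hc; rewrite !Rminus_0_r in Ex, Hc.
  exists mu; auto.
Qed.

Definition in_box_upto (n : nat) (t : R) : Prop :=
  forall u, 0 <= u <= t -> forall k, (k <= n)%nat -> Box alpha beta (orbit k u).

Lemma orbit_cone n t : in_box_upto n t -> forall u w, 0 <= u <= t -> 0 <= w <= t ->
  Rabs (snd (orbit n w) - snd (orbit n u)) <= L * Rabs (fst (orbit n w) - fst (orbit n u)).
Proof.
  intros Hin u w Hu Hw.
  destruct (orbit_expansion n u w) as [mu [_ [_ Hc]]]; [|exact Hc].
  intros k Hk; split; apply Hin; auto; lia.
Qed.

(* The first coordinate of [orbit (S n)] is monotone on [[0, t1]], so cutting
   the segment where it reaches the vertical side keeps it inside the box. *)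
Lemma orbit_reaches_side n t1 : 0 <= t1 -> in_box_upto n t1 ->
  alpha <= Rabs (fst (orbit (S n) t1)) ->
  exists ts, 0 <= ts <= t1 /\ in_box_upto (S n) ts /\ fst (orbit (S n) ts) = orient (S n) * alpha.
Proof.
  intros Ht1 Hin Hfar.
  set (c := orient (S n)); assert (Hc := orient_sign (S n)); fold c in Hc.
  assert (Hprefix : forall u, 0 <= u <= t1 -> forall k, (k < S n)%nat -> Box alpha beta (orbit k u))
    by (intros u Hu k Hk; apply Hin; [exact Hu|lia]).
  assert (Hpow : 0 < lam ^ S n) by (apply pow_lt; lra).
  assert (Hmono : forall u w, 0 <= u <= w -> w <= t1 ->
            0 <= c * (fst (orbit (S n) w) - fst (orbit (S n) u))).
  { intros u w Huw Hw; destruct (orbit_expansion (S n) u w) as [mu [Hmu [Ex _]]].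
    { intros k Hk; split; apply Hprefix; auto; lra. }
    rewrite Ex; fold c; rewrite <- !Rmult_assoc, sign_sqr, Rmult_1_l by exact Hc; nra. }
  assert (Hside : 0 <= alpha <= c * fst (orbit (S n) t1)).
  { assert (H := Hmono 0 t1 ltac:(lra) ltac:(lra)).
    rewrite orbit_origin, Rminus_0_r in H; cbn [fst] in H.
    rewrite (sign_mul_Rabs c) by assumption; lra. }
  destruct (IVT_gen (fun t => fst (orbit (S n) t)) 0 t1 (c * alpha) (orbit_fst_continuity (S n)))
    as [ts [Hts Ets]].
  { rewrite orbit_origin; now apply sign_between. }
  rewrite Rmin_left, Rmax_right in Hts by lra.
  exists ts; split; [exact Hts|split; [|exact Ets]].
  intros u Hu k Hk; destruct (Compare_dec.le_lt_eq_dec k (S n) Hk) as [Hlt| ->]; [apply Hprefix; [lra|exact Hlt]|].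
  destruct (orbit_from_origin (S n) u) as [_ [_ [_ Hcone]]]; [apply Hprefix; lra|].
  apply Box_of_cone; [exact Hcone|].
  assert (H0 := Hmono 0 u ltac:(lra) ltac:(lra)); assert (H1 := Hmono u ts ltac:(lra) ltac:(lra)).
  rewrite orbit_origin, Rminus_0_r in H0; cbn [fst] in H0.
  rewrite <- (sign_mul_Rabs c) by assumption.
  rewrite Ets in H1.
  replace (c * (c * alpha - fst (orbit (S n) u))) with (c * c * alpha - c * fst (orbit (S n) u))
    in H1 by ring.
  rewrite sign_sqr in H1 by exact Hc; lra.
Qed.

Variable x0 : R.
Hypothesis Hx0 : 0 < x0.
Hypothesis Hx0alpha : x0 <= alpha.

(* If the segment never reached the side of the box, it would stay in the box
   forever, contradicting the growth [lam ^ n] of its first coordinate. *)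
Lemma orbit_escapes : exists N ts, 0 <= ts <= x0 /\ in_box_upto N ts /\
  fst (orbit N ts) = orient N * alpha.
Proof.
  apply NNPP; intros Hno.
  assert (Hall : forall n, in_box_upto n x0).
  { induction n as [|n IH]; intros u Hu k Hk.
    - replace k with 0%nat by lia; unfold orbit; simpl.
      apply Box_of_cone; simpl.
      + rewrite Rabs_R0; apply Rmult_le_pos; [lra|apply Rabs_pos].
      + rewrite Rabs_sign_mul, Rabs_pos_eq by (assumption || lra); lra.
    - destruct (Compare_dec.le_lt_eq_dec k (S n) Hk) as [Hlt| ->]; [apply IH; [exact Hu|lia]|].
      apply NNPP; intros Hout; apply Hno.
      destruct (orbit_reaches_side n u) as [ts [Hts [Hin Ets]]].
      + lra.
      + intros u' Hu' k' Hk'; apply IH; [lra|exact Hk'].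
      + destruct (Rle_or_lt alpha (Rabs (fst (orbit (S n) u)))) as [|Hnear]; [assumption|].
        exfalso; apply Hout, Box_of_cone; [|lra].
        destruct (orbit_from_origin (S n) u) as [_ [_ [_ Hcone]]]; [|exact Hcone].
        intros k' Hk'; apply IH; [exact Hu|lia].
      + exists (S n), ts; split; [lra|auto]. }
  destruct (Pow_x_infinity lam ltac:(rewrite Rabs_pos_eq; lra) (alpha / x0 + 1)) as [M HM].
  specialize (HM M (le_n M)); rewrite Rabs_pos_eq in HM by (apply pow_le; lra).
  destruct (orbit_from_origin M x0) as [mu [Hmu [Ex _]]].
  { intros k Hk; apply (Hall M); [lra|lia]. }
  destruct (Hall M x0 ltac:(lra) M (le_n M)) as [Hx _].
  assert (0 < lam ^ M) by (apply pow_lt; lra).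
  rewrite Ex, Rmult_assoc, Rabs_sign_mul, Rabs_mult, !Rabs_pos_eq in Hx
    by (apply orient_sign || lra).
  assert (alpha / x0 * x0 = alpha) by (field; lra).
  assert ((alpha / x0 + 1) * x0 <= mu * x0) by (apply Rmult_le_compat_r; lra).
  lra.
Qed.

(* When [e = -1] the side reached may be the wrong one; one more iterate,
   which still expands the first coordinate, flips it to the other side. *)
Lemma orbit_reaches_sigma_side : exists N ts, 0 <= ts <= x0 /\ in_box_upto N ts /\
  fst (orbit N ts) = sigma * alpha.
Proof.
  destruct orbit_escapes as [N [ts [Hts [Hin Ets]]]].
  destruct (orient_parity N) as [Eo|Eo]; [exists N, ts; rewrite <- Eo; auto|].
  destruct (orbit_reaches_side N ts) as [ts' [Hts' [Hin' Ets']]]; [lra|exact Hin| |].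
  - destruct (orbit_from_origin N ts) as [_ [_ [_ Hcone]]]; [intros k Hk; apply Hin; [lra|lia]|].
    assert (B0 : Box alpha beta (0, 0)).
    { apply Box_of_cone; simpl; rewrite Rabs_R0; lra. }
    destruct (Hexpanding (0, 0) (orbit N ts) B0 (Hin ts ltac:(lra) N (le_n N)))
      as [mu [Hmu [Ex _]]]; [simpl; now rewrite !Rminus_0_r|].
    rewrite Hfix in Ex; simpl in Ex; rewrite !Rminus_0_r in Ex.
    change (orbit (S N) ts) with (g (orbit N ts)).
    rewrite <- (Rabs_sign_mul e) by exact He; rewrite Ex, Ets, Rabs_mult, Rabs_sign_mul
      by apply orient_sign.
    rewrite !Rabs_pos_eq by lra; generalize (Rmult_le_compat_r alpha 1 mu ltac:(lra) ltac:(lra)); lra.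
  - exists (S N), ts'; rewrite <- Eo; split; [lra|auto].
Qed.

End SegmentOrbit.

(** * A cone graph meets the path *)

Definition clamp (lo hi x : R) : R := Rmax lo (Rmin hi x).

Lemma clamp_in lo hi x : lo <= hi -> lo <= clamp lo hi x <= hi.
Proof. unfold clamp, Rmax, Rmin; intros; repeat destruct Rle_dec; lra. Qed.

Lemma clamp_id lo hi x : lo <= x <= hi -> clamp lo hi x = x.
Proof. unfold clamp, Rmax, Rmin; intros; repeat destruct Rle_dec; lra. Qed.

Lemma clamp_lipschitz lo hi x y : Rabs (clamp lo hi x - clamp lo hi y) <= Rabs (x - y).
Proof. unfold clamp, Rmax, Rmin, Rabs; repeat destruct Rle_dec; repeat destruct Rcase_abs; lra. Qed.

Lemma lipschitz_continuous (f : R -> R) K : 0 <= K ->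
  (forall x y, Rabs (f x - f y) <= K * Rabs (x - y)) -> forall x, continuous f x.
Proof.
  intros HK Hf x; apply filterlim_locally; intros eps.
  assert (Hd : 0 < eps / (K + 1)) by (apply Rdiv_lt_0_compat; [apply cond_pos|lra]).
  exists (mkposreal _ Hd); intros y Hy; apply ball_R_Rabs; rewrite ball_R_Rabs in Hy; simpl in Hy.
  apply Rle_lt_trans with (K * Rabs (y - x)); [apply Hf|].
  apply Rle_lt_trans with (K * (eps / (K + 1))); [apply Rmult_le_compat_l; lra|].
  replace (K * (eps / (K + 1))) with (eps - eps / (K + 1)) by (field; lra); lra.
Qed.

Lemma clamped_path_continuous (v : R -> R * R) :
  (forall s, -1 <= s <= 1 ->
     filterlim v (within (fun t => -1 <= t <= 1) (locally s)) (locally (v s))) ->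
  forall t, continuous (fun t => v (clamp (-1) 1 t)) t.
Proof.
  intros Hv t.
  apply filterlim_comp with (G := within (fun s => -1 <= s <= 1) (locally (clamp (-1) 1 t))).
  - intros P HP.
    assert (Hc := lipschitz_continuous (clamp (-1) 1) 1 ltac:(lra)
                    ltac:(intros; rewrite Rmult_1_l; apply clamp_lipschitz) t _ HP).
    unfold filtermap in *; revert Hc; apply filter_imp; intros x H; apply H, clamp_in; lra.
  - apply Hv, clamp_in; lra.
Qed.

Lemma continuous_nonvanishing_sign (f : R -> R) a b : a <= b -> continuity f ->
  (forall s, a <= s <= b -> f s <> 0) ->
  exists sigma, is_sign sigma /\ forall s, a <= s <= b -> 0 < sigma * f s.
Proof.
  intros Hab Hf Hnz.
  destruct (sign_of_nonzero (f a) (Hnz a ltac:(lra))) as [sigma [Hs Ha]].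
  exists sigma; split; [exact Hs|]; intros s Hs'.
  destruct (Rlt_or_le 0 (sigma * f s)) as [|Hle]; [assumption|exfalso].
  destruct (IVT_gen f a s 0 Hf) as [z [Hz Ez]].
  { rewrite Rmin_comm, Rmax_comm; apply (between_0_of_sign sigma); [exact Hs|lra|lra]. }
  apply (Hnz z); [rewrite Rmin_left, Rmax_right in Hz by lra; lra|exact Ez].
Qed.

Lemma path_fst_constant_sign (v : R -> R * R) :
  (forall s, -1 <= s <= 1 ->
     filterlim v (within (fun t => -1 <= t <= 1) (locally s)) (locally (v s))) ->
  (forall s, -1 <= s <= 1 -> fst (v s) <> 0) ->
  exists sigma, is_sign sigma /\ forall s, -1 <= s <= 1 -> 0 < sigma * fst (v s).
Proof.
  intros Hv Hv0.
  destruct (continuous_nonvanishing_sign (fun t => fst (v (clamp (-1) 1 t))) (-1) 1)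
    as [sigma [Hsigma Hside]]; [lra| |intros s Hs; rewrite clamp_id by exact Hs; now apply Hv0|].
  - intros t; apply continuity_pt_filterlim.
    apply (continuous_comp (fun t => v (clamp (-1) 1 t)) fst); [now apply clamped_path_continuous|].
    destruct (v _); apply continuous_fst.
  - exists sigma; split; [exact Hsigma|]; intros s Hs.
    generalize (Hside s Hs); now rewrite clamp_id.
Qed.

Section ConeCurveCrossing.

Variables (X Y : R -> R) (v : R -> R * R) (L alpha sigma ts : R).
Hypothesis HL : 0 < L.
Hypothesis Hsigma : is_sign sigma.
Hypothesis Hts : 0 <= ts.
Hypothesis HX : continuity X.
Hypothesis HX0 : X 0 = 0.
Hypothesis HY0 : Y 0 = 0.
Hypothesis HXts : X ts = sigma * alpha.
Hypothesis Hcone : forall u w, 0 <= u <= ts -> 0 <= w <= ts ->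
  Rabs (Y w - Y u) <= L * Rabs (X w - X u).

Definition curve_clamp (x : R) : R := clamp (Rmin 0 (sigma * alpha)) (Rmax 0 (sigma * alpha)) x.

Lemma curve_param x : { u | 0 <= u <= ts /\ X u = curve_clamp x }.
Proof.
  destruct (IVT_gen X 0 ts (curve_clamp x) HX) as [u [Hu Eu]].
  { rewrite HX0, HXts; apply clamp_in, Rminmax. }
  exists u; rewrite Rmin_left, Rmax_right in Hu by lra; auto.
Qed.

(* By the cone condition the curve is the graph of a function of its first coordinate. *)
Definition curve_graph (x : R) : R := Y (proj1_sig (curve_param x)).

Lemma curve_graph_lipschitz x x' : Rabs (curve_graph x - curve_graph x') <= L * Rabs (x - x').
Proof.
  unfold curve_graph; destruct (curve_param x) as [u [Hu Eu]], (curve_param x') as [u' [Hu' Eu']].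
  simpl; apply Rle_trans with (1 := Hcone u' u Hu' Hu).
  rewrite Eu, Eu'; apply Rmult_le_compat_l; [lra|apply clamp_lipschitz].
Qed.

Lemma curve_graph_cone x : Rabs (curve_graph x) <= L * Rabs (curve_clamp x).
Proof.
  unfold curve_graph; destruct (curve_param x) as [u [Hu Eu]]; simpl.
  generalize (Hcone 0 u ltac:(lra) Hu); rewrite HX0, HY0, Eu, !Rminus_0_r; auto.
Qed.

Hypothesis Hv : forall s, -1 <= s <= 1 ->
  filterlim v (within (fun t => -1 <= t <= 1) (locally s)) (locally (v s)).
Hypothesis Hvx : forall s, -1 <= s <= 1 -> 0 < sigma * fst (v s) <= alpha.
Hypothesis Hvm : snd (v (-1)) = - L * fst (v (-1)).
Hypothesis Hvp : snd (v 1) = L * fst (v 1).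

Lemma curve_clamp_path s : -1 <= s <= 1 -> curve_clamp (fst (v s)) = fst (v s).
Proof.
  intros Hs; apply clamp_id.
  replace (fst (v s)) with (sigma * (sigma * fst (v s)))
    by (rewrite <- Rmult_assoc, sign_sqr by exact Hsigma; ring).
  apply sign_between; [exact Hsigma|].
  rewrite <- Rmult_assoc, sign_sqr by exact Hsigma; generalize (Hvx s Hs); lra.
Qed.

Lemma cone_curve_meets_path : exists u s, 0 <= u <= ts /\ -1 <= s <= 1 /\ (X u, Y u) = v s.
Proof.
  set (w := fun t => v (clamp (-1) 1 t)).
  set (F := fun t => snd (w t) - curve_graph (fst (w t))).
  assert (HF : continuity F).
  { intros t; apply continuity_pt_filterlim.
    apply (continuous_minus (fun t => snd (w t)) (fun t => curve_graph (fst (w t)))).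
    - apply (continuous_comp w snd); [now apply clamped_path_continuous|].
      destruct (w t); apply continuous_snd.
    - apply (continuous_comp (fun t => fst (w t)) curve_graph).
      + apply (continuous_comp w fst); [now apply clamped_path_continuous|].
        destruct (w t); apply continuous_fst.
      + apply (lipschitz_continuous _ L); [lra|apply curve_graph_lipschitz]. }
  assert (Hend : forall s, -1 <= s <= 1 -> w s = v s) by (intros s Hs; unfold w; now rewrite clamp_id).
  assert (Hbound : forall s, -1 <= s <= 1 ->
            Rabs (sigma * curve_graph (fst (v s))) <= L * (sigma * fst (v s))).
  { intros s Hs; rewrite Rabs_sign_mul, (sign_mul_Rabs sigma) by (exact Hsigma || generalize (Hvx s Hs); lra).
    rewrite <- (curve_clamp_path s Hs) at 2; apply curve_graph_cone. }
  destruct (IVT_gen F (-1) 1 0 HF) as [s [Hs Es]].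
  { apply (between_0_of_sign sigma); [exact Hsigma| |]; unfold F; rewrite !Hend by lra.
    - assert (H := Hbound (-1) ltac:(lra)); rewrite Hvm.
      replace (sigma * (- L * fst (v (-1)) - curve_graph (fst (v (-1)))))
        with (- (L * (sigma * fst (v (-1)))) - sigma * curve_graph (fst (v (-1)))) by ring.
      unfold Rabs in H; destruct Rcase_abs; lra.
    - assert (H := Hbound 1 ltac:(lra)); rewrite Hvp.
      replace (sigma * (L * fst (v 1) - curve_graph (fst (v 1))))
        with (L * (sigma * fst (v 1)) - sigma * curve_graph (fst (v 1))) by ring.
      unfold Rabs in H; destruct Rcase_abs; lra. }
  rewrite Rmin_left, Rmax_right in Hs by lra.
  unfold F in Es; rewrite Hend in Es by exact Hs.
  assert (Eg : curve_graph (fst (v s)) = snd (v s)) by lra.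
  unfold curve_graph in Eg; destruct (curve_param (fst (v s))) as [u [Hu Eu]]; simpl in Eg.
  exists u, s; split; [exact Hu|split; [exact Hs|]].
  rewrite Eu, curve_clamp_path, Eg by exact Hs; symmetry; apply surjective_pairing.
Qed.

End ConeCurveCrossing.

Lemma in_IDg_split g U p0 L : U p0 ->
  (forall a11 a12 a21 a22 y, in_IDg g U a11 a12 a21 a22 -> Rabs y <= L ->
     Rabs (a11 * 1 + a12 * y) > 1 /\ Rabs (a21 * 1 + a22 * y) <= L) ->
  (forall a b y, in_hull U (dx (comp1 g)) a -> in_hull U (dy (comp1 g)) b -> Rabs y <= L ->
     1 < Rabs (a + b * y)) /\
  (forall a b y, in_hull U (dx (comp2 g)) a -> in_hull U (dy (comp2 g)) b -> Rabs y <= L ->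
     Rabs (a + b * y) <= L).
Proof.
  intros Hp0 H; split; intros a b y Ha Hb Hy.
  - destruct (H a b (dx (comp2 g) p0) (dy (comp2 g) p0) y) as [Hx _]; [|exact Hy|].
    + repeat split; try apply Ha; try apply Hb; apply in_hull_value, Hp0.
    + now rewrite Rmult_1_r in Hx.
  - destruct (H (dx (comp1 g) p0) (dy (comp1 g) p0) a b y) as [_ Hx]; [|exact Hy|].
    + repeat split; try apply Ha; try apply Hb; apply in_hull_value, Hp0.
    + now rewrite Rmult_1_r in Hx.
Qed.

Theorem mainTheorem17
  (g : R * R -> R * R) (L alpha beta : R) (v : R -> R * R) :
  C1_map g ->
  g (0, 0) = (0, 0) ->
  0 < L ->
  0 < alpha -> 0 < beta -> beta / alpha > L ->
  (forall s, -1 <= s <= 1 ->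
     filterlim v (within (fun t => -1 <= t <= 1) (locally s)) (locally (v s))) ->
  (forall s, -1 <= s <= 1 -> Box alpha beta (v s)) ->
  snd (v (-1)) = - L * fst (v (-1)) ->
  snd (v 1) = L * fst (v 1) ->
  (forall s, -1 <= s <= 1 -> fst (v s) <> 0) ->
  (forall a11 a12 a21 a22 y,
     in_IDg g (Box alpha beta) a11 a12 a21 a22 -> Rabs y <= L ->
     Rabs (a11 * 1 + a12 * y) > 1 /\ Rabs (a21 * 1 + a22 * y) <= L) ->
  forall delta, 0 < delta ->
  exists (p : R * R) (n : nat),
    Scone L delta p /\
    (forall k, (k <= n)%nat -> Box alpha beta (Nat.iter k g p)) /\
    exists s, -1 <= s <= 1 /\ Nat.iter n g p = v s.
Proof.
  intros HC Hfix HL Halpha Hbeta Hratio Hv HvB Hvm Hvp Hv0 HIDg delta Hdelta.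
  assert (B0 : Box alpha beta (0, 0)) by (split; simpl; rewrite Rabs_R0; lra).
  assert (HLalpha : L * alpha < beta).
  { replace beta with (beta / alpha * alpha) by (field; lra); apply Rmult_lt_compat_r; lra. }
  destruct (in_IDg_split g _ _ L B0 HIDg) as [Hexp Hcone].
  destruct (hull_uniform_expansion _ _ _ L _ B0 HL Hexp) as [e [lam [He [Hlam Hbound]]]].
  assert (Hg := C1_cone_expanding g alpha beta L e lam HC Hbound Hcone).
  destruct (path_fst_constant_sign v Hv Hv0) as [sigma [Hsigma Hside]].
  destruct (orbit_reaches_sigma_side g alpha beta L e lam sigma Hg (C1_map_continuous g HC) Hfix HL
              He Hsigma Hlam Halpha HLalpha (Rmin delta alpha) (Rmin_pos _ _ Hdelta Halpha) (Rmin_r _ _))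
    as [N [ts [Hts [Hin HXts]]]].
  destruct (cone_curve_meets_path (fun t => fst (orbit g sigma N t)) (fun t => snd (orbit g sigma N t))
              v L alpha sigma ts HL Hsigma ltac:(lra) (orbit_fst_continuity g sigma (C1_map_continuous g HC) N))
    as [u [s [Hu [Hs E]]]]; try (now rewrite orbit_origin).
  - exact HXts.
  - exact (orbit_cone g alpha beta L e lam sigma Hg HL He Hlam N ts Hin).
  - exact Hv.
  - intros s Hs; split; [now apply Hside|].
    rewrite (sign_mul_Rabs sigma) by (assumption || now apply Rlt_le, Hside); apply HvB, Hs.
  - exact Hvm.
  - exact Hvp.
  - exists (sigma * u, 0), N; split; [|split].
    + split; simpl; rewrite ?Rabs_R0, ?Rabs_sign_mul, ?Rabs_pos_eq by (assumption || lra).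
      * apply Rmult_le_pos; lra.
      * generalize (Rmin_l delta alpha); lra.
    + intros k Hk; apply Hin; [lra|exact Hk].
    + exists s; split; [exact Hs|]; rewrite <- E; apply surjective_pairing.
Qed.
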